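(* Let $(M,\bar g)$ be an umbilically synchronized space-time and let $V$ be a conformal vector field on $M$ ($\pounds_V\bar g=2\psi\bar g$ for a smooth function $\psi$) that is tangential to the spatial slices $\Sigma_t$. Then $V$ is Killing if and only if the lapse function $N$ is constant along $V$ (i.e. $V(N)=0$), equivalently, if and only if $V$ is orthogonal to the acceleration vector field $\mathbf A=\bar\nabla_{\mathbf n}\mathbf n$.
   Context: An umbilically synchronized space-time is an $(n+1)$-dimensional Lorentzian manifold $M$ with coordinates $(t,x^1,\dots,x^n)$ and metric $ds^2=-N^2dt^2+g_{ij}dx^idx^j$ (zero shift), lapse $N>0$, such that each spatial slice $\Sigma_t=\{t=\text{const}\}$ is totally umbilical: $K_{ij}=\bar g(\bar\nabla_{\partial_i}\mathbf n,\partial_j)=\tau g_{ij}$, where $\mathbf n=\frac1N\partial_t$ is the unit normal and $\tau$ the mean curvature. The acceleration $\mathbf A=\bar\nabla_{\mathbf n}\mathbf n$ equals the spatial gradient of $\ln N$. *)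

(* Coordinate formalization of an umbilically
   synchronized space-time on a coordinate domain U (open subset of R^(n+1)),
   coordinates x = (x^0 = t, x^1, ..., x^n), indices 'I_(n.+1), index ord0 = t. *)
From HB Require Import structures.
From mathcomp Require Import all_boot all_order all_algebra.
From mathcomp Require Import all_classical all_reals all_analysis.
Set Implicit Arguments. Unset Strict Implicit. Unset Printing Implicit Defensive.
Import Order.TTheory GRing.Theory Num.Theory.
Import numFieldNormedType.Exports.
Local Open Scope classical_set_scope.
Local Open Scope ring_scope.

Section Defs.
Variables (R : realType) (n : nat).

Definition pt := 'rV[R]_(n.+1).

Definition cvec (a : 'I_(n.+1)) : pt := delta_mx 0 a.

Definition pd (a : 'I_(n.+1)) (f : pt -> R) : pt -> R :=
  fun x => 'D_(cvec a) f x.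

Definition iter_pd (s : seq 'I_(n.+1)) (f : pt -> R) : pt -> R := foldr pd f s.

Definition smooth_on (U : set pt) (f : pt -> R) : Prop :=
  forall (s : seq 'I_(n.+1)) (x : pt), U x -> differentiable (iter_pd s f) x.

(* spacetime metric with zero shift: -N^2 dt^2 + g_ij dx^i dx^j *)
Definition gbar (N : pt -> R) (g : 'I_n -> 'I_n -> pt -> R)
  (a b : 'I_(n.+1)) (x : pt) : R :=
  match unlift ord0 a, unlift ord0 b with
  | Some i, Some j => g i j x
  | None, None => - (N x ^+ 2)
  | _, _ => 0
  end.

(* Christoffel symbols of the first kind: Gamma_{c,ab} = gbar(nabla_a d_b, d_c) *)
Definition christoffel1 (G : 'I_(n.+1) -> 'I_(n.+1) -> pt -> R)
  (c a b : 'I_(n.+1)) (x : pt) : R :=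
  2^-1 * (pd a (G b c) x + pd b (G a c) x - pd c (G a b) x).

(* gbar(nabla_X Y, Z) for the Levi-Civita connection, vector fields given by
   their coordinate components *)
Definition conn_pair (G : 'I_(n.+1) -> 'I_(n.+1) -> pt -> R)
  (X Y Z : 'I_(n.+1) -> pt -> R) (x : pt) : R :=
  \sum_(a < n.+1) \sum_(b < n.+1) \sum_(c < n.+1)
    X a x * Z c x * (pd a (Y b) x * G b c x + Y b x * christoffel1 G c a b x).

Definition unit_normal (N : pt -> R) (a : 'I_(n.+1)) (x : pt) : R :=
  if a == ord0 then (N x)^-1 else 0.

Definition spatial_field (i : 'I_n) (a : 'I_(n.+1)) (x : pt) : R :=
  if a == lift ord0 i then 1 else 0.

Definition second_ff (N : pt -> R) (g : 'I_n -> 'I_n -> pt -> R)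
  (i j : 'I_n) (x : pt) : R :=
  conn_pair (gbar N g) (spatial_field i) (unit_normal N) (spatial_field j) x.

Definition accel_pair (N : pt -> R) (g : 'I_n -> 'I_n -> pt -> R)
  (V : 'I_(n.+1) -> pt -> R) (x : pt) : R :=
  conn_pair (gbar N g) (unit_normal N) (unit_normal N) V x.

Definition lie_metric (G : 'I_(n.+1) -> 'I_(n.+1) -> pt -> R)
  (V : 'I_(n.+1) -> pt -> R) (a b : 'I_(n.+1)) (x : pt) : R :=
  \sum_(c < n.+1) (V c x * pd c (G a b) x + G c b x * pd a (V c) x
                   + G a c x * pd b (V c) x).

Definition vf_apply (V : 'I_(n.+1) -> pt -> R) (f : pt -> R) (x : pt) : R :=
  \sum_(c < n.+1) V c x * pd c f x.

Definition umbilically_synchronized (U : set pt) (N : pt -> R)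
  (g : 'I_n -> 'I_n -> pt -> R) : Prop :=
  open U /\
  smooth_on U N /\ (forall i j, smooth_on U (g i j)) /\
  (forall x, U x -> 0 < N x) /\
  (forall i j x, U x -> g i j x = g j i x) /\
  (forall (v : 'I_n -> R) x, U x -> (exists i, v i != 0) ->
      0 < \sum_(i < n) \sum_(j < n) v i * v j * g i j x) /\
  (exists tau : pt -> R, forall i j x, U x ->
      second_ff N g i j x = tau x * g i j x).

Definition conformal_on (U : set pt) (G : 'I_(n.+1) -> 'I_(n.+1) -> pt -> R)
  (V : 'I_(n.+1) -> pt -> R) : Prop :=
  exists psi : pt -> R, smooth_on U psi /\
    forall a b x, U x -> lie_metric G V a b x = 2 * psi x * G a b x.

Definition killing_on (U : set pt) (G : 'I_(n.+1) -> 'I_(n.+1) -> pt -> R)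
  (V : 'I_(n.+1) -> pt -> R) : Prop :=
  forall a b x, U x -> lie_metric G V a b x = 0.

End Defs.

(* Since V is tangential (V^t = 0) and g_tt = -N^2 is the only component of the
   metric involving t, the (t,t) component of the Lie derivative is
   (L_V gbar)_tt = V(g_tt) = -2 N V(N).  Comparing with the conformal equation
   (L_V gbar)_tt = 2 psi g_tt = -2 psi N^2 gives psi = V(N)/N, so V is Killing
   iff V(N) = 0.  A direct computation of the Christoffel symbols gives
   gbar(A, V) = V(N)/N as well. *)
From mathcomp Require Import all_boot all_order all_algebra.
From mathcomp Require Import all_classical all_reals all_analysis.
From mathcomp Require Import ring.
Set Implicit Arguments. Unset Strict Implicit. Unset Printing Implicit Defensive.
Import Order.TTheory GRing.Theory Num.Theory.
Import numFieldNormedType.Exports.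
Local Open Scope classical_set_scope.
Local Open Scope ring_scope.

Section PartialDerivatives.
Variables (R : realType) (n : nat).

Lemma pd_cst0 (c : 'I_n.+1) (x : pt R n) : pd c (fun=> 0 : R) x = 0.
Proof. exact: derive_cst. Qed.

Lemma pd_eq0_on (U : set (pt R n)) (f : pt R n -> R) (c : 'I_n.+1) (x : pt R n) :
  open U -> U x -> (forall y, U y -> f y = 0) -> pd c f x = 0.
Proof.
move=> oU Ux f0; rewrite /pd (@near_eq_derive _ _ _ f (cst 0)) ?derive_cst //.
have : nbhs x U by apply: open_nbhs_nbhs.
by apply: filterS => y /f0.
Qed.

Lemma pd_opp_sqr (f : pt R n -> R) (c : 'I_n.+1) (x : pt R n) :
  differentiable f x -> pd c (fun y => - (f y ^+ 2)) x = - (2 * f x * pd c f x).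
Proof.
move=> df; rewrite /pd.
have -> : (fun y => - (f y ^+ 2)) = - (f ^+ 2) by apply: funext => y; rewrite /= exprfctE.
rewrite deriveN; last exact/derivableX/diff_derivable.
by rewrite deriveX ?expr1 //; exact/diff_derivable.
Qed.

End PartialDerivatives.

Section ZeroShiftMetric.
Variables (R : realType) (n : nat) (N : pt R n -> R) (g : 'I_n -> 'I_n -> pt R n -> R).

Lemma gbar00 : gbar N g ord0 ord0 = fun x => - (N x ^+ 2).
Proof. by rewrite /gbar unlift_none. Qed.

Lemma gbar0_spatial (c : 'I_n.+1) : c != ord0 ->
  gbar N g ord0 c = (fun=> 0) /\ gbar N g c ord0 = (fun=> 0).
Proof.
by case: (unliftP ord0 c) => [j ->|-> /eqP//] _; rewrite /gbar unlift_none liftK.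
Qed.

Lemma lie_metric00 (U : set (pt R n)) (V : 'I_n.+1 -> pt R n -> R) (x : pt R n) :
  open U -> U x -> (forall y, U y -> V ord0 y = 0) -> differentiable N x ->
  lie_metric (gbar N g) V ord0 ord0 x = - (2 * N x * vf_apply V N x).
Proof.
move=> oU Ux V0 dN; rewrite /lie_metric /vf_apply mulr_sumr -sumrN.
apply: eq_bigr => c _; have [->|c0] := eqVneq c ord0.
  by rewrite V0 // (pd_eq0_on _ oU Ux V0) !(mul0r, mulr0, addr0) oppr0.
have [-> ->] := gbar0_spatial c0.
by rewrite gbar00 pd_opp_sqr // !(mul0r, addr0) mulrN mulrCA.
Qed.

Lemma accel_pairE (V : 'I_n.+1 -> pt R n -> R) (x : pt R n) :
  N x != 0 -> differentiable N x -> V ord0 x = 0 ->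
  accel_pair N g V x = vf_apply V N x / N x.
Proof.
move=> Nx0 dN V0; rewrite /accel_pair /conn_pair /vf_apply.
have normal_spatial b : b != ord0 -> unit_normal N b = fun=> 0.
  by move=> /negPf b0; apply: funext => y; rewrite /unit_normal b0.
rewrite (bigD1 ord0) //= [X in _ + X]big1 ?addr0; last first.
  move=> a /negPf a0; apply: big1 => b _; apply: big1 => c _.
  by rewrite /unit_normal a0 !mul0r.
rewrite (bigD1 ord0) //= [X in _ + X]big1 ?addr0; last first.
  move=> b /normal_spatial ->; apply: big1 => c _.
  by rewrite pd_cst0 !mul0r add0r mulr0.
rewrite mulr_suml; apply: eq_bigr => c _; have [->|c0] := eqVneq c ord0.
  by rewrite V0 !(mul0r, mulr0).
(* the only surviving Christoffel symbol is Gamma_{c,tt} = N d_c N *)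
have [G0c _] := gbar0_spatial c0.
rewrite /christoffel1 G0c !pd_cst0 gbar00 pd_opp_sqr // /unit_normal eqxx.
by field.
Qed.

Lemma conformal_factorE (U : set (pt R n)) (V : 'I_n.+1 -> pt R n -> R)
    (psi : pt R n -> R) (x : pt R n) :
  open U -> U x -> (forall y, U y -> V ord0 y = 0) ->
  differentiable N x -> N x != 0 ->
  lie_metric (gbar N g) V ord0 ord0 x = 2 * psi x * gbar N g ord0 ord0 x ->
  psi x = vf_apply V N x / N x.
Proof.
move=> oU Ux V0 dN Nx0; rewrite (lie_metric00 oU Ux V0 dN) gbar00 => conf.
apply: (mulIf Nx0); rewrite divfK //; apply: (@mulfI _ (- (2 * N x))).
  by rewrite oppr_eq0 mulf_eq0 pnatr_eq0 negb_or Nx0.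
by rewrite [RHS]mulNr conf; ring.
Qed.

Lemma killing_iff_lapse_invariant (U : set (pt R n)) (V : 'I_n.+1 -> pt R n -> R) :
  open U -> (forall x, U x -> differentiable N x) -> (forall x, U x -> N x != 0) ->
  (forall y, U y -> V ord0 y = 0) -> conformal_on U (gbar N g) V ->
  killing_on U (gbar N g) V <-> (forall x, U x -> vf_apply V N x = 0).
Proof.
move=> oU dN Nx0 V0 [psi [_ conf]]; split=> [killing x Ux | VN0 a b x Ux].
  have := lie_metric00 oU Ux V0 (dN x Ux); rewrite killing // => /esym/eqP.
  by rewrite oppr_eq0 !mulf_eq0 pnatr_eq0 (negPf (Nx0 x Ux)) => /eqP.
have psi0 : psi x = 0.
  have conf00 := conf ord0 ord0 x Ux.
  by rewrite (conformal_factorE oU Ux V0 (dN x Ux) (Nx0 x Ux) conf00) VN0 // mul0r.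
by rewrite conf // psi0 mulr0 mul0r.
Qed.

End ZeroShiftMetric.

Theorem theorem4 (R : realType) (n : nat) (U : set (pt R n))
  (N : pt R n -> R) (g : 'I_n -> 'I_n -> pt R n -> R)
  (V : 'I_(n.+1) -> pt R n -> R) :
  umbilically_synchronized U N g ->
  (forall a, smooth_on U (V a)) ->
  (forall x, U x -> V ord0 x = 0) ->
  conformal_on U (gbar N g) V ->
  (killing_on U (gbar N g) V <-> (forall x, U x -> vf_apply V N x = 0)) /\
  (killing_on U (gbar N g) V <-> (forall x, U x -> accel_pair N g V x = 0)).
Proof.
move=> [oU [smoothN [_ [Npos _]]]] _ V0 conformal.
have dN x : U x -> differentiable N x by move=> Ux; exact: (smoothN [::]).
have Nx0 x : U x -> N x != 0 by move=> Ux; rewrite gt_eqF ?Npos.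
have killingE := killing_iff_lapse_invariant oU dN Nx0 V0 conformal.
have accelE x : U x -> accel_pair N g V x = vf_apply V N x / N x.
  by move=> Ux; exact: accel_pairE (Nx0 x Ux) (dN x Ux) (V0 x Ux).
split=> //; rewrite killingE; split=> VN0 x Ux.
  by rewrite accelE // VN0 // mul0r.
have := VN0 x Ux; rewrite accelE // => /eqP.
by rewrite mulf_eq0 invr_eq0 (negPf (Nx0 x Ux)) orbF => /eqP.
Qed.
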